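(* Let $f:\mathbb{R}^{d-1}\to\mathbb{R}\cup\{+\infty\}$ be a convex function which is finite and $\mathcal{C}^2$ in a neighborhood of $0$, with $f(0)=0$, $Df(0)=0$ and $D^2f(0)=2\,\mathrm{Id}$ (so $f(x')=\|x'\|^2+o(\|x'\|^2)$ as $x'\to0$). Then for every $\varepsilon>0$ there exists $r>0$ such that $f(x')\ge\tilde f(x')$ for all $x'\in\mathbb{R}^{d-1}$, where $\tilde f(x')=(1-\varepsilon)\|x'\|^2$ if $\|x'\|\le r$, and $\tilde f(x')=(1-\varepsilon)\,r\,(2\|x'\|-r)$ if $\|x'\|\ge r$.
   Context: In the paper, $f$ is the function such that a convex domain $D\subset\mathbb{R}^d$ is given (after an affine change of coordinates placing a boundary point at the origin with tangent hyperplane $\{x_1=0\}$) by $\{(x_1,x'):x_1+f(x')<0\}$, $x'=(x_2,\dots,x_d)$; $\|\cdot\|$ is the Euclidean norm. *)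

From HB Require Import structures.
From mathcomp Require Import all_boot all_order all_algebra.
From mathcomp Require Import all_classical all_reals all_analysis.
Set Implicit Arguments. Unset Strict Implicit. Unset Printing Implicit Defensive.
Import Order.TTheory GRing.Theory Num.Theory.
Import numFieldNormedType.Exports.
Local Open Scope ring_scope.

(* Points x' of R^(d-1) are row vectors 'rV[R]_n with n = d - 1. *)

Definition enorm (R : realType) (n : nat) (x : 'rV[R]_n) : R :=
  Num.sqrt (\sum_(i < n) x ord0 i ^+ 2).

Definition ebasis (R : realType) (n : nat) (i : 'I_n) : 'rV[R]_n :=
  delta_mx ord0 i.

(* convexity of an extended-real valued function with values in R ∪ {+oo} *)
Definition ext_convex (R : realType) (n : nat) (f : 'rV[R]_n -> \bar R) : Prop :=
  (forall x, f x != -oo%E) /\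
  forall (x y : 'rV[R]_n) (t : R), 0 < t < 1 ->
    (f (t *: x + (1 - t) *: y)%R <= t%:E * f x + (1 - t)%:E * f y)%E.

Definition ftilde (R : realType) (n : nat) (eps r : R) (x : 'rV[R]_n) : R :=
  if enorm x <= r then (1 - eps) * enorm x ^+ 2
  else (1 - eps) * r * (2 * enorm x - r).
Arguments ebasis {R n}.

From HB Require Import structures.
From mathcomp Require Import all_boot all_order all_algebra.
From mathcomp Require Import all_classical all_reals all_analysis.
From mathcomp Require Import ring lra.
Import Order.TTheory GRing.Theory Num.Theory.
Import numFieldNormedType.Exports.
Local Open Scope ring_scope.

(* Write g for f on the ball where f is finite. Moving from 0 to z along the coordinate
   axes and comparing with D^2 g(0) = 2 Id (mean value theorem) gives
   |d_i g(z) - 2 z_i| <= eta |z|_1 near 0, while convexity turns the partial derivatives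
   of g at any point y of that ball into a supporting hyperplane of f at y. Summing the
   supporting-hyperplane inequalities at the points (k/N) x, k < N, gives
   f(x) >= (1 - eps) |x|^2 for |x| <= r, and for |x| > r the supporting hyperplane at
   the point r x / |x| gives the linear continuation (1 - eps) r (2 |x| - r). *)

Section Norms.
Context {R : realType} {n : nat}.
Implicit Types (x y : 'rV[R]_n).

Definition sqnorm x := \sum_(i < n) x ord0 i ^+ 2.
Definition l1norm x := \sum_(i < n) `|x ord0 i|.

Lemma sqnorm_ge0 x : 0 <= sqnorm x.
Proof. by apply: sumr_ge0 => i _; exact: sqr_ge0. Qed.

Lemma l1norm_ge0 x : 0 <= l1norm x.
Proof. exact: sumr_ge0. Qed.

Lemma enorm_ge0 x : 0 <= enorm x.
Proof. exact: sqrtr_ge0. Qed.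

Lemma enorm0 : enorm (0 : 'rV[R]_n) = 0.
Proof. by rewrite /enorm big1 ?sqrtr0 // => i _; rewrite mxE expr0n. Qed.

Lemma enorm_sqr x : enorm x ^+ 2 = sqnorm x.
Proof. by rewrite sqr_sqrtr // sqnorm_ge0. Qed.

Lemma enorm_lt_sqnorm x d : 0 < d -> (enorm x < d) = (sqnorm x < d ^+ 2).
Proof.
by move=> d0; rewrite /enorm -{1}(gtr0_norm d0) -sqrtr_sqr ltr_sqrt // exprn_gt0.
Qed.

Lemma enorm_le_coord x y :
  (forall i, `|x ord0 i| <= `|y ord0 i|) -> enorm x <= enorm y.
Proof.
move=> xy; rewrite ler_sqrt; last exact: sqnorm_ge0.
apply: ler_sum => i _.
rewrite -[x ord0 i ^+ 2](real_normK (num_real _)).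
by rewrite -[y ord0 i ^+ 2](real_normK (num_real _)) lerXn2r ?nnegrE.
Qed.

Lemma normc_le_enorm x i : `|x ord0 i| <= enorm x.
Proof.
rewrite -sqrtr_sqr ler_sqrt; last exact: sqnorm_ge0.
rewrite (bigD1 i) //= lerDl.
by apply: sumr_ge0 => j _; exact: sqr_ge0.
Qed.

Lemma normc_le_l1norm x i : `|x ord0 i| <= l1norm x.
Proof. by rewrite /l1norm (bigD1 i) //= lerDl sumr_ge0. Qed.

Lemma l1norm_le_enorm x : l1norm x <= n%:R * enorm x.
Proof.
rewrite mulr_natl -[n in _ *+ n]card_ord -sumr_const.
by apply: ler_sum => i _; exact: normc_le_enorm.
Qed.

Lemma sqnormZ x t : sqnorm (t *: x) = t ^+ 2 * sqnorm x.
Proof. by rewrite /sqnorm mulr_sumr; apply: eq_bigr => i _; rewrite mxE exprMn. Qed.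

Lemma l1normZ x t : l1norm (t *: x) = `|t| * l1norm x.
Proof. by rewrite /l1norm mulr_sumr; apply: eq_bigr => i _; rewrite mxE normrM. Qed.

Lemma enormZ x t : enorm (t *: x) = `|t| * enorm x.
Proof. by rewrite /enorm -/(sqnorm _) sqnormZ sqrtrM ?sqrtr_sqr // sqr_ge0. Qed.

Lemma row_sum_ebasis x : x = \sum_(i < n) x ord0 i *: ebasis i.
Proof.
apply/rowP => j; rewrite summxE (bigD1 j) //= big1 ?addr0.
  by rewrite !mxE eqxx /= mulr1.
by move=> i ij; rewrite !mxE eqxx /= eq_sym (negbTE ij) mulr0.
Qed.

Lemma sqnorm_shift x i h :
  sqnorm (h *: ebasis i + x) = sqnorm x + h * (2 * x ord0 i + h).
Proof.
rewrite /sqnorm (bigD1 i) //= [in RHS](bigD1 i) //=.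
rewrite (eq_bigr (fun j => x ord0 j ^+ 2)); last first.
  by move=> j /negbTE ji; rewrite !mxE eqxx /= ji mulr0 add0r.
rewrite !mxE !eqxx /= mulr1; set S := \sum_(j < n | _) _; lra.
Qed.

Lemma enorm_shift_lt {x : 'rV[R]_n} {d : R} : enorm x < d ->
  exists2 s : R, 0 < s & forall i h, `|h| < s -> enorm (h *: ebasis i + x) < d.
Proof.
move=> xd; have d0 : 0 < d by exact: le_lt_trans (enorm_ge0 x) xd.
have A0 := enorm_ge0 x; set A := enorm x in xd A0.
have D0 : 0 < d ^+ 2 - sqnorm x by rewrite subr_gt0 -enorm_lt_sqnorm.
exists (Num.min 1 ((d ^+ 2 - sqnorm x) / (2 * A + 1))).
  by rewrite lt_min ltr01 divr_gt0 //; lra.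
move=> i h; rewrite lt_min => /andP [h1 h2].
rewrite enorm_lt_sqnorm // sqnorm_shift.
have xiA : `|x ord0 i| <= A by exact: normc_le_enorm.
have lin : h * (2 * x ord0 i + h) <= `|h| * (2 * A + 1).
  apply: le_trans (ler_norm _) _; rewrite normrM; apply: ler_wpM2l => //.
  apply: le_trans (ler_normD _ _) _; rewrite normrM ger0_norm //; lra.
have : `|h| * (2 * A + 1) < d ^+ 2 - sqnorm x by rewrite -ltr_pdivlMr //; lra.
lra.
Qed.

End Norms.

Section Convexity.
Context {R : realType} {n : nat} {f : 'rV[R]_n -> \bar R}.
Hypothesis f_convex : ext_convex f.

Lemma ext_convex_le {x y t a b} : 0 < t < 1 ->
  (f x <= a%:E)%E -> (f y <= b%:E)%E ->
  (f (t *: x + (1 - t) *: y) <= (t * a + (1 - t) * b)%:E)%E.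
Proof.
case: f_convex => _ fc t01 fxa fyb; apply: le_trans (fc x y t t01) _.
case/andP: t01 => t0 t1; rewrite (EFinD (t * a)) (EFinM t a) (EFinM (1 - t) b).
by apply: leeD; apply: lee_wpmul2l => //; rewrite lee_fin; lra.
Qed.

Lemma ext_convex_mean_le {I : Type} (s : seq I) {y : I -> 'rV[R]_n} {b : I -> R} :
  (forall i, (f (y i) <= (b i)%:E)%E) -> (0 < size s)%N ->
  (f ((size s)%:R^-1 *: \sum_(i <- s) y i)
     <= ((size s)%:R^-1 * \sum_(i <- s) b i)%:E)%E.
Proof.
move=> fyb; elim: s => // i [|j s] IH _.
  by rewrite !big_cons !big_nil !addr0 invr1 scale1r mul1r.
have {IH} := IH isT; set s' := j :: s => IH.
rewrite big_cons [in X in (_ <= X)%E]big_cons /=; set k := size s'.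
have k0 : 0 < k.+1%:R :> R by rewrite ltr0n.
pose t : R := k%:R / k.+1%:R.
have t01 : 0 < t < 1.
  by rewrite divr_gt0 ?ltr0n //= ltr_pdivrMr // mul1r ltr_nat.
have tk : t * k%:R^-1 = k.+1%:R^-1 by rewrite mulrAC divff ?mul1r // pnatr_eq0.
have t1 : 1 - t = k.+1%:R^-1.
  apply: (mulIf (lt0r_neq0 k0)); rewrite mulrBl divfK ?mulVf ?lt0r_neq0 //.
  by rewrite mul1r -natr1; lra.
have := ext_convex_le t01 IH (fyb i).
by rewrite scalerA tk t1 mulrA tk -scalerDr -mulrDr addrC [b i + _]addrC.
Qed.

Lemma ext_convex_chord {x z gz L t} : f z = gz%:E -> 0 < t < 1 ->
  ((gz + t * L)%:E <= f (t *: x + (1 - t) *: z))%E -> ((gz + L)%:E <= f x)%E.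
Proof.
move=> fz t01 lower; case fx : (f x) => [a| |]; last 2 first.
- exact: leey.
- by case: f_convex => fNy _; move: (fNy x); rewrite fx.
have fxa : (f x <= a%:E)%E by rewrite fx.
have fzg : (f z <= gz%:E)%E by rewrite fz.
have := le_trans lower (ext_convex_le t01 fxa fzg).
case/andP: t01 => t0 _; rewrite !lee_fin => ineq.
by rewrite -(ler_pM2l t0); lra.
Qed.

End Convexity.

Lemma derivable_approx {R : realType} {V : normedModType R} {g : V -> R} {z v : V} :
  derivable g z v -> forall th : R, 0 < th ->
  \forall h \near (0 : R), `|g (h *: v + z) - g z - h * derive g z v| <= th * `|h|.
Proof.
move=> dg th th0.
have : (\forall h \near (0 : R)^',
    `|derive g z v - h^-1 *: (g (h *: v + z) - g z)| <= th)%classic.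
  exact: (@cvgr_dist_le _ _ _ _ _ _ _ dg th th0).
move=> /nbhs_ballP [e e0 near_dq].
apply/nbhs_ballP; exists e => // h ball_h.
have [->|h0] := eqVneq h 0.
  by rewrite scale0r add0r subrr mul0r subr0 normr0 mulr0.
have /= dq := near_dq h ball_h h0.
set D := g _ - g z in dq *; set p := derive _ _ _ in dq *.
have -> : D - h * p = - h * (p - h^-1 * D).
  by rewrite mulrBr !mulNr opprK mulrA mulfV // mul1r addrC.
by rewrite normrM normrN mulrC ler_wpM2r.
Qed.

Section Subgradient.
Context {R : realType} {n : nat} (f : 'rV[R]_n -> \bar R).
Hypothesis f_convex : ext_convex f.
Variables (z : 'rV[R]_n) (gz : R) (p : 'I_n -> R).
Hypothesis fz : f z = gz%:E.

(* z - v is the mean of the points z - n v_i e_i, and z is the midpoint of z - v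
   and z + v. *)
Lemma ext_convex_lower_near {th s : R} : (0 < n)%N ->
  (forall i h, `|h| < s ->
     (f (h *: ebasis i + z) <= (gz + h * p i + th * `|h|)%:E)%E) ->
  forall v : 'rV[R]_n, (forall i, `|n%:R * v ord0 i| < s) ->
  ((gz + \sum_i p i * v ord0 i - th * l1norm v)%:E <= f (z + v))%E.
Proof.
move=> n0 near_z v small.
pose y i := (- (n%:R * v ord0 i)) *: ebasis i + z.
pose b i := gz + (- (n%:R * v ord0 i)) * p i + th * `|n%:R * v ord0 i|.
have fyb i : (f (y i) <= (b i)%:E)%E.
  by rewrite /y /b -(normrN (n%:R * _)); apply: near_z; rewrite normrN.
have size_enum : size (index_enum 'I_n) = n by rewrite -sum1_size sum1_card card_ord.
have := ext_convex_mean_le f_convex (index_enum _) fyb; rewrite size_enum => /(_ n0).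
have nz : n%:R != 0 :> R by rewrite pnatr_eq0 -lt0n.
have -> : n%:R^-1 *: \sum_(i <- index_enum 'I_n) y i = z - v.
  rewrite -/(\sum_(i < n) y i) /y big_split /= sumr_const card_ord.
  rewrite [v in RHS]row_sum_ebasis scalerDr -[z *+ n]scaler_nat scalerA.
  rewrite mulVf // scale1r addrC; congr (_ + _).
  rewrite -sumrN scaler_sumr; apply: eq_bigr => i _.
  by rewrite scaleNr scalerN scalerA mulrA mulVf // mul1r.
have -> : \sum_(i <- index_enum 'I_n) b i
    = n%:R * (gz - \sum_i p i * v ord0 i + th * l1norm v).
  rewrite -/(\sum_(i < n) b i) /b !big_split /= sumr_const card_ord.
  rewrite /l1norm mulr_sumr mulrDr mulrBr !mulr_sumr mulr_natl -sumrN.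
  congr (_ + _ + _); apply: eq_bigr => i _.
    by rewrite mulNr -mulrA (mulrC (v ord0 i)).
  by rewrite (@normrM _ (n%:R : R)) (ger0_norm (ler0n _ _)) mulrCA.
rewrite mulKf //.
move=> fzv; case fv : (f (z + v)) => [a| |]; last 2 first.
- exact: leey.
- by case: f_convex => fNy _; move: (fNy (z + v)); rewrite fv.
have half : 0 < (1 / 2 : R) < 1 by apply/andP; split; lra.
have fva : (f (z + v) <= a%:E)%E by rewrite fv.
have := ext_convex_le f_convex half fva fzv.
have -> : 1 / 2 *: (z + v) + (1 - 1 / 2) *: (z - v) = z.
  rewrite [1 - _](_ : _ = 1 / 2); last by lra.
  by rewrite -scalerDr addrACA subrr addr0 scalerDr -scalerDl -splitr scale1r.
by rewrite fz !lee_fin; set P := \sum_i _; lra.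
Qed.

Lemma ext_convex_supporting : (0 < n)%N ->
  (forall th : R, 0 < th -> \forall h \near (0 : R), forall i,
     (f (h *: ebasis i + z) <= (gz + h * p i + th * `|h|)%:E)%E) ->
  forall x : 'rV[R]_n, ((gz + \sum_i p i * (x ord0 i - z ord0 i))%:E <= f x)%E.
Proof.
move=> n0 near_z x.
rewrite (eq_bigr (fun i => p i * (x - z) ord0 i)); last by move=> i _; rewrite !mxE.
set v := x - z; set P := \sum_i _; set N := l1norm v.
have N0 : 0 <= N := l1norm_ge0 v.
suff approx (th : R) : 0 < th -> ((gz + P - th * N)%:E <= f x)%E.
  apply/lee_addgt0Pr => ep ep0.
  have th0 : 0 < ep / (N + 1) by rewrite divr_gt0 //; lra.
  have thN : ep / (N + 1) * N <= ep.
    by rewrite mulrAC ler_pdivrMr ?ler_pM2l //; lra.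
  by apply: le_trans (leeD2r _ (approx _ th0)); rewrite -EFinD lee_fin; lra.
move=> th0; have /nbhs_ballP [s s0 ball_s] := near_z th th0.
have near_z' i h : `|h| < s ->
    (f (h *: ebasis i + z) <= (gz + h * p i + th * `|h|)%:E)%E.
  by move=> hs; apply: ball_s; rewrite /ball /= sub0r normrN.
set nN := n%:R * N.
have nN0 : 0 <= nN by rewrite mulr_ge0.
have nNs : 0 < nN + s := ltr_wpDl nN0 s0.
pose t := s / (2 * (nN + s)).
have t0 : 0 < t by rewrite divr_gt0 // mulr_gt0.
have t_small : t * (2 * (nN + s)) = s by rewrite divfK // mulf_neq0 // gt_eqF.
have t01 : 0 < t < 1 by rewrite t0 /= ltr_pdivrMr; lra.
have small i : `|n%:R * (t *: v) ord0 i| < s.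
  rewrite mxE normrM normrM (ger0_norm (ler0n _ _)) (gtr0_norm t0).
  have vi := normc_le_l1norm v i.
  have : n%:R * (t * `|v ord0 i|) <= t * nN.
    by rewrite mulrCA ler_pM2l // ler_wpM2l.
  by move/le_lt_trans; apply; rewrite -t_small; nra.
have := ext_convex_lower_near n0 near_z' (t *: v) small.
have -> : z + t *: v = t *: x + (1 - t) *: z.
  by rewrite /v scalerBr scalerBl scale1r addrCA addrA.
rewrite l1normZ (gtr0_norm t0) -/N.
rewrite (eq_bigr (fun i => t * (p i * v ord0 i))); last first.
  by move=> i _; rewrite mxE mulrCA.
rewrite -mulr_sumr -/P [th * _]mulrCA -addrA -mulrBr.
move/(ext_convex_chord f_convex fz t01).
by rewrite addrA.
Qed.

End Subgradient.

Lemma ext_convex_subgradient {R : realType} {n : nat} {f : 'rV[R]_n -> \bar R} {delta : R} :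
  ext_convex f -> (forall x, enorm x < delta -> f x \is a fin_num) ->
  forall z : 'rV[R]_n, enorm z < delta ->
  (forall i, derivable (fun x => fine (f x)) z (ebasis i)) ->
  forall x : 'rV[R]_n, ((fine (f z) + \sum_i derive (fun x => fine (f x)) z (ebasis i)
                * (x ord0 i - z ord0 i))%:E <= f x)%E.
Proof.
move=> f_convex f_fin z zd dg x.
have fz : f z = (fine (f z))%:E by rewrite fineK // f_fin.
case: n f f_convex f_fin z zd dg x fz => [|k] f f_convex f_fin z zd dg x fz.
  by rewrite big_ord0 addr0 (thinmx0 x) -(thinmx0 z) -fz.
apply: ext_convex_supporting => // th th0.
have [s s0 stay] := enorm_shift_lt zd.
have : \forall h \near (0 : R), forall i,
    `|fine (f (h *: ebasis i + z)) - fine (f z)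
      - h * derive (fun x => fine (f x)) z (ebasis i)| <= th * `|h|.
  exact: (@filter_forall _ _ _ (nbhs (0 : R)) _
    (fun i => derivable_approx (dg i) th th0)).
move=> /nbhs_ballP [s' s'0 approx].
apply/nbhs_ballP; exists (Num.min s s'); first by rewrite /= lt_min s0; exact: s'0.
move=> h; rewrite /ball /= sub0r normrN.
rewrite lt_min => /andP [hs hs'] i.
have := approx h; rewrite /ball /= sub0r normrN => /(_ hs' i) approx_h.
rewrite -(fineK (f_fin _ (stay i h hs))) lee_fin.
move: approx_h (ler_norm (fine (f (h *: ebasis i + z)) - fine (f z)
  - h * derive (fun x => fine (f x)) z (ebasis i))); lra.
Qed.

Section MeanValue.
Context {R : realType}.

Lemma MVT_affine_le {phi dphi : R -> R} {L eta a b : R} : a <= b ->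
  (forall x, a <= x <= b -> is_derive x 1 phi (dphi x)) ->
  (forall x, a <= x <= b -> `|dphi x - L| <= eta) ->
  `|phi b - phi a - L * (b - a)| <= eta * (b - a).
Proof.
move=> ab dphiP dphi_near; have [<-|ab'] := eqVneq a b.
  by rewrite !subrr mulr0 subr0 normr0 mulr0.
have lab : a < b by rewrite lt_neqAle ab' ab.
have [c + ->] : exists2 c, c \in `]a, b[ & phi b - phi a = dphi c * (b - a).
  apply: MVT => // [x|].
    by rewrite in_itv /= => /andP [ax xb]; apply: dphiP; rewrite !ltW.
  apply: derivable_within_continuous => x; rewrite in_itv /= => xab.
  by case: (dphiP x xab).
rewrite in_itv /= => /andP [ac cb].
have ba : 0 < b - a by rewrite subr_gt0.
by rewrite -mulrBl normrM (gtr0_norm ba) ler_pM2r //; apply: dphi_near; rewrite !ltW.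
Qed.

Lemma MVT_abs_le {phi dphi : R -> R} {L eta c : R} :
  (forall t : R, `|t| <= `|c| -> is_derive t 1 phi (dphi t)) ->
  (forall t : R, `|t| <= `|c| -> `|dphi t - L| <= eta) ->
  `|phi c - phi 0 - L * c| <= eta * `|c|.
Proof.
move=> dphiP dphi_near; have [c0|c0] := leP 0 c.
  have in_c t : 0 <= t <= c -> `|t| <= `|c|.
    by case/andP=> t0 tc; rewrite !ger0_norm // (le_trans t0 tc).
  have := MVT_affine_le c0 (fun t ht => dphiP t (in_c t ht))
    (fun t ht => dphi_near t (in_c t ht)).
  by rewrite subr0 (ger0_norm c0).
have in_c t : c <= t <= 0 -> `|t| <= `|c|.
  by case/andP=> ct t0; rewrite (ler0_norm t0) (ltr0_norm c0) lerN2.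
have -> : phi c - phi 0 - L * c = - (phi 0 - phi c - L * (0 - c)) by ring.
rewrite normrN (ltr0_norm c0) -[X in _ <= _ * X]sub0r.
exact: MVT_affine_le (ltW c0) (fun t ht => dphiP t (in_c t ht))
  (fun t ht => dphi_near t (in_c t ht)).
Qed.

Lemma is_derive_line {V : normedModType R} {G : V -> R} {a v : V} {s : R} :
  derivable G (s *: v + a) v ->
  is_derive s 1 (fun t => G (t *: v + a)) (derive G (s *: v + a) v).
Proof.
have quotE : (fun h : R => h^-1 *: (((fun t => G (t *: v + a)) \o shift s) (h *: 1)
            - G (s *: v + a)))
    = (fun h : R => h^-1 *: ((G \o shift (s *: v + a)) (h *: v) - G (s *: v + a))).
  by apply: funext => h /=; rewrite -[h%:A]/(h * 1) mulr1 scalerDl addrA.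
move=> dG; apply: DeriveDef; first by rewrite /derivable quotE.
by rewrite /derive quotE.
Qed.

Lemma derive_dir_MVT_le {V : normedModType R} (G : V -> R) (a v : V) (L eta c : R) :
  (forall t : R, `|t| <= `|c| -> derivable G (t *: v + a) v) ->
  (forall t : R, `|t| <= `|c| -> `|derive G (t *: v + a) v - L| <= eta) ->
  `|G (c *: v + a) - G a - L * c| <= eta * `|c|.
Proof.
move=> dG dG_near.
have := MVT_abs_le (fun t ht => is_derive_line (dG t ht)) dG_near.
by rewrite scale0r add0r.
Qed.

End MeanValue.

Lemma mx_norm_le_enorm {R : realType} {n : nat} (x : 'rV[R]_n) : `|x| <= enorm x.
Proof.
rewrite -[`|x|]/(mx_norm x) mx_normrE.
apply: bigmax_le; first exact: enorm_ge0.
by move=> [a b] _ /=; rewrite (ord1 a); exact: normc_le_enorm.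
Qed.

Lemma continuous_family_radius {R : realType} {n : nat} {I : finType}
    (D : I -> 'rV[R]_n -> R) :
  (forall k, {for 0, continuous (D k)}) ->
  forall eta : R, 0 < eta -> exists2 e : R, 0 < e &
    forall x, enorm x < e -> forall k, `|D k 0 - D k x| <= eta.
Proof.
move=> Dc eta eta0.
have : \forall x \near (0 : 'rV[R]_n), forall k, `|D k 0 - D k x| <= eta.
  apply: (@filter_forall _ _ _ (nbhs (0 : 'rV[R]_n))) => k.
  exact: (@cvgr_dist_le _ _ _ _ _ _ _ (Dc k) eta eta0).
move=> /nbhs_ballP [e e0 near_D]; exists e => // x xe.
apply: near_D; rewrite -ball_normE /ball_ /= sub0r normrN.
exact: le_lt_trans (mx_norm_le_enorm x) xe.
Qed.

Section RowPrefix.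
Context {R : realType} {n : nat} (z : 'rV[R]_n).

Definition row_prefix (m : nat) : 'rV[R]_n :=
  \row_j (if (j < m)%N then z ord0 j else 0).

Lemma row_prefix0 : row_prefix 0 = 0.
Proof. by apply/rowP => j; rewrite !mxE ltn0. Qed.

Lemma row_prefix_full : row_prefix n = z.
Proof. by apply/rowP => j; rewrite !mxE ltn_ord. Qed.

Lemma row_prefixS {m : nat} {M : 'I_n} : nat_of_ord M = m ->
  row_prefix m.+1 = z ord0 M *: ebasis M + row_prefix m.
Proof.
move=> Mm; apply/rowP => j; rewrite !mxE !eqxx /= ltnS leq_eqVlt.
case: (j =P M) => [->|/eqP jM]; first by rewrite Mm !eqxx ltnn mulr1 addr0.
have -> : (nat_of_ord j == m) = false by rewrite -Mm; exact: negbTE jM.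
by rewrite mulr0 add0r.
Qed.

Lemma row_prefix_shift_le m (M : 'I_n) s j : nat_of_ord M = m ->
  `|s| <= `|z ord0 M| -> `|(s *: ebasis M + row_prefix m) ord0 j| <= `|z ord0 j|.
Proof.
move=> Mm sz; rewrite !mxE !eqxx /=.
case: (j =P M) => [->|_]; first by rewrite Mm ltnn mulr1 addr0.
by rewrite mulr0 add0r; case: ifP => _; rewrite ?normr0.
Qed.

End RowPrefix.

Section GradientNearZero.
Context {R : realType} {n : nat} {g : 'rV[R]_n -> R} {delta : R}.
Let D i j y := derive (fun z => derive g z (ebasis i)) y (ebasis j).
Hypothesis dg_derivable : forall x i j, enorm x < delta ->
  derivable (fun y => derive g y (ebasis i)) x (ebasis j).
Hypothesis D_cont : forall i j, {for 0, continuous (D i j)}.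
Hypothesis dg0 : forall i, derive g 0 (ebasis i) = 0.
Hypothesis D0 : forall i j, D i j 0 = if i == j then 2 else 0.

Lemma partial_grad_near0 {eta : R} : 0 < delta -> 0 < eta ->
  exists2 rho : R, 0 < rho <= delta & forall z, enorm z < rho ->
    forall i, `|derive g z (ebasis i) - 2 * z ord0 i| <= eta * l1norm z.
Proof.
move=> delta0 eta0.
have [e e0 D_near] := continuous_family_radius
  (fun ij : 'I_n * 'I_n => D ij.1 ij.2) (fun ij => D_cont ij.1 ij.2) eta eta0.
exists (Num.min e delta); first by rewrite lt_min e0 delta0 ge_min lexx orbT.
move=> z; rewrite lt_min => /andP [ze zd].
suff prefix m : (m <= n)%N -> forall i, `|derive g (row_prefix z m) (ebasis i)
    - 2 * row_prefix z m ord0 i| <= eta * \sum_(j < n | (j < m)%N) `|z ord0 j|.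
  move=> i; have := prefix n (leqnn n) i; rewrite row_prefix_full.
  by rewrite (eq_bigl xpredT) // => j; rewrite ltn_ord.
elim: m => [|m IH] mn k.
  by rewrite row_prefix0 dg0 mxE mulr0 subrr normr0 mulr_ge0 ?sumr_ge0 // ltW.
pose M := Ordinal mn; have Mm : nat_of_ord M = m by [].
set a := row_prefix z m; pose L : R := if k == M then 2 else 0.
have seg_in t : `|t| <= `|z ord0 M| -> enorm (t *: ebasis M + a) <= enorm z.
  by move=> tz; apply: enorm_le_coord => j; exact: row_prefix_shift_le.
have seg : `|derive g (z ord0 M *: ebasis M + a) (ebasis k)
    - derive g a (ebasis k) - L * z ord0 M| <= eta * `|z ord0 M|.
  apply: (derive_dir_MVT_le (fun y => derive g y (ebasis k)) a (ebasis M)) => t tz.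
    by apply: dg_derivable; exact: le_lt_trans (seg_in t tz) zd.
  have := D_near _ (le_lt_trans (seg_in t tz) ze) (k, M).
  by rewrite /= D0 distrC.
rewrite (row_prefixS z Mm) -/a (bigD1 M) /=; last by rewrite ltnSn.
rewrite (eq_bigl (fun j : 'I_n => (j < m)%N)); last first.
  move=> j /=; rewrite ltnS leq_eqVlt.
  have -> : (j != M) = (nat_of_ord j != m) by [].
  by case: ltngtP.
have -> : 2 * (z ord0 M *: ebasis M + a) ord0 k = L * z ord0 M + 2 * a ord0 k.
  rewrite !mxE !eqxx /= /L; case: (k == M) => /=; lra.
rewrite mulrDr (_ : _ - (L * z ord0 M + 2 * a ord0 k) =
  (derive g (z ord0 M *: ebasis M + a) (ebasis k) - derive g a (ebasis k) - L * z ord0 M)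
  + (derive g a (ebasis k) - 2 * a ord0 k)); last by ring.
exact: le_trans (ler_normD _ _) (lerD seg (IH (ltnW mn) k)).
Qed.

End GradientNearZero.

Lemma l1norm_sqr_le {R : realType} {n : nat} (x : 'rV[R]_n) :
  l1norm x ^+ 2 <= n%:R ^+ 2 * sqnorm x.
Proof.
rewrite -enorm_sqr -exprMn lerXn2r ?nnegrE ?l1norm_ge0 ?l1norm_le_enorm //.
by rewrite mulr_ge0 ?enorm_ge0.
Qed.

Lemma sum_mul_lower {R : realFieldType} {n : nat} (u v w : 'I_n -> R) (c : R) :
  (forall i, `|u i - v i| <= c) ->
  \sum_i v i * w i - c * \sum_i `|w i| <= \sum_i u i * w i.
Proof.
move=> uv; have : 0 <= \sum_i ((u i - v i) * w i + c * `|w i|).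
  apply: sumr_ge0 => i _.
  have := ler_norm (- ((u i - v i) * w i)); rewrite normrN normrM.
  have := ler_wpM2r (normr_ge0 (w i)) (uv i); lra.
rewrite big_split /= -mulr_sumr (eq_bigr (fun i => u i * w i - v i * w i)).
  by rewrite sumrB; lra.
by move=> i _; rewrite mulrBl.
Qed.

Lemma nat_slope_lower {R : realFieldType} {u : nat -> R} {c : R} {N : nat} :
  u 0 = 0 -> (forall k, (k < N)%N -> u k + c * k%:R <= u k.+1) ->
  c * (N%:R * (N%:R - 1) / 2) <= u N.
Proof.
move=> u0; elim: N => [|N IH] slope; first by rewrite u0 mul0r mul0r mulr0.
have := slope N (ltnSn N); have := IH (fun k kN => slope k (ltnW kN)).
have -> : c * (N.+1%:R * (N.+1%:R - 1) / 2) = c * (N%:R * (N%:R - 1) / 2) + c * N%:R.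
  by rewrite -natr1; field.
lra.
Qed.

Section QuadraticMinorant.
Context {R : realType} {n : nat} {f : 'rV[R]_n -> \bar R} {p : 'rV[R]_n -> 'I_n -> R}.
Context {rho e eta : R}.
Hypothesis f_fin : forall x, enorm x < rho -> f x \is a fin_num.
Hypothesis f0 : fine (f 0) = 0.
Hypothesis e_gt0 : 0 < e.
Hypothesis eta_ge0 : 0 <= eta.
Hypothesis eta_small : eta * n%:R ^+ 2 <= e.
Hypothesis p_supporting : forall y : 'rV[R]_n, enorm y < rho -> forall x : 'rV[R]_n,
  ((fine (f y) + \sum_i p y i * (x ord0 i - y ord0 i))%:E <= f x)%E.
Hypothesis p_near : forall y : 'rV[R]_n, enorm y < rho -> forall i,
  `|p y i - 2 * y ord0 i| <= eta * l1norm y.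

Lemma radial_slope_lower x a b : 0 <= a -> 0 <= b -> enorm (a *: x) < rho ->
  a * b * ((2 - e) * sqnorm x) <= \sum_i p (a *: x) i * (b *: x) ord0 i.
Proof.
move=> a0 b0 ax_rho.
apply: le_trans _ (sum_mul_lower (p (a *: x)) (fun i => 2 * (a *: x) ord0 i)
  (fun i => (b *: x) ord0 i) _ (p_near _ ax_rho)).
rewrite (eq_bigr (fun i => 2 * a * b * x ord0 i ^+ 2)); last first.
  by move=> i _; rewrite !mxE; ring.
rewrite -mulr_sumr -/(sqnorm x) -/(l1norm (b *: x)) !l1normZ !ger0_norm //.
have quad : (2 - e) * sqnorm x <= 2 * sqnorm x - eta * l1norm x ^+ 2.
  have := ler_wpM2l eta_ge0 (l1norm_sqr_le x).
  have := ler_wpM2r (sqnorm_ge0 x) eta_small.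
  rewrite mulrA; lra.
rewrite [X in _ <= X](_ : _ = a * b * (2 * sqnorm x - eta * l1norm x ^+ 2)).
  by apply: ler_wpM2l; rewrite ?mulr_ge0.
by ring.
Qed.

Lemma minorant_in_ball x : enorm x < rho -> (1 - e) * sqnorm x <= fine (f x).
Proof.
(* The supporting hyperplanes at the points (k/N) x give the Riemann-sum bound
   (2 - e) (1 - 1/N) / 2 * |x|^2, which is at least (1 - e) |x|^2 once N > 2/e. *)
move=> x_rho; pose N := (Num.trunc (2 / e)).+1.
have N_big : 2 / e < N%:R := truncnS_gt _.
have N0 : 0 < N%:R :> R by rewrite ltr0n.
pose t := (N%:R : R)^-1.
have t0 : 0 < t by rewrite invr_gt0.
have tN : t * N%:R = 1 by rewrite mulVf // gt_eqF.
have te : 2 * t < e.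
  have : 2 * t < N%:R * e * t by rewrite ltr_pM2r // -ltr_pdivrMr.
  by rewrite mulrAC [N%:R * t]mulrC tN mul1r.
pose u k := fine (f ((k%:R * t) *: x)).
have in_ball k : (k <= N)%N -> enorm ((k%:R * t) *: x) < rho.
  move=> kN; have kt1 : k%:R * t <= 1 by rewrite -[X in _ <= X]tN mulrC ler_pM2l // ler_nat.
  rewrite enormZ ger0_norm ?mulr_ge0 ?ler0n ?ltW //.
  have := ler_wpM2r (enorm_ge0 x) kt1; rewrite mul1r => le_x.
  exact: le_lt_trans le_x x_rho.
have slope k : (k < N)%N -> u k + (2 - e) * sqnorm x * t ^+ 2 * k%:R <= u k.+1.
  move=> kN; have := p_supporting _ (in_ball k (ltnW kN)) ((k.+1%:R * t) *: x).
  rewrite -(fineK (f_fin _ (in_ball k.+1 kN))) lee_fin.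
  rewrite (eq_bigr (fun i => p ((k%:R * t) *: x) i * (t *: x) ord0 i)); last first.
    by move=> i _; rewrite !mxE -natr1; congr (_ * _); ring.
  have := radial_slope_lower x _ _ (mulr_ge0 (ler0n _ k) (ltW t0)) (ltW t0)
    (in_ball k (ltnW kN)).
  rewrite /u; set P := \sum_i _; set S := sqnorm x; move=> slope_k; lra.
have u0 : u 0 = 0 by rewrite /u mul0r scale0r.
have := nat_slope_lower u0 slope; rewrite /u [N%:R * t]mulrC tN scale1r.
have -> : (2 - e) * sqnorm x * t ^+ 2 * (N%:R * (N%:R - 1) / 2)
    = (2 - e) * sqnorm x * ((1 - t) / 2).
  transitivity ((2 - e) * sqnorm x * ((t * N%:R) * (t * N%:R - t) / 2)).
    by ring.
  by rewrite tN mul1r.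
have gap : 0 <= e - 2 * t + e * t by have := mulr_ge0 (ltW e_gt0) (ltW t0); lra.
have := mulr_ge0 (sqnorm_ge0 x) gap.
set S := sqnorm x; move=> ? ?; lra.
Qed.

Lemma minorant_outside x r : 0 < r < rho -> r < enorm x ->
  (((1 - e) * r * (2 * enorm x - r))%:E <= f x)%E.
Proof.
case/andP=> r0 r_rho xr; set X := enorm x; have X0 : 0 < X := lt_trans r0 xr.
pose a := r / X; have a0 : 0 < a by rewrite divr_gt0.
have a1 : 0 <= 1 - a by rewrite subr_ge0 ler_pdivrMr // mul1r ltW.
have ax_r : enorm (a *: x) = r by rewrite enormZ gtr0_norm // divfK // gt_eqF.
have ax_rho : enorm (a *: x) < rho by rewrite ax_r.
apply: le_trans _ (p_supporting _ ax_rho x); rewrite lee_fin.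
have := minorant_in_ball _ ax_rho; rewrite -enorm_sqr ax_r.
rewrite (eq_bigr (fun i => p (a *: x) i * ((1 - a) *: x) ord0 i)); last first.
  by move=> i _; rewrite !mxE mulrBl mul1r.
have := radial_slope_lower x _ _ (ltW a0) a1 ax_rho.
have -> : a * (1 - a) * ((2 - e) * sqnorm x) = (2 - e) * (r * (X - r)).
  rewrite -enorm_sqr -/X; transitivity ((2 - e) * ((a * X) * (X - a * X))).
    by ring.
  by rewrite /a divfK // gt_eqF.
have Xr : 0 <= X - r by rewrite subr_ge0 ltW.
have := mulr_ge0 (ltW e_gt0) (mulr_ge0 (ltW r0) Xr).
set P := \sum_i _; set G := fine _; lra.
Qed.

Lemma ftilde_le_f {r : R} : 0 < r < rho -> forall x, ((ftilde e r x)%:E <= f x)%E.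
Proof.
move=> r_pos x; case/andP: (r_pos) => r0 r_rho; rewrite /ftilde.
case: ifPn => [xr|]; last by rewrite -ltNge; exact: minorant_outside.
have x_rho := le_lt_trans xr r_rho.
by rewrite -(fineK (f_fin _ x_rho)) lee_fin enorm_sqr; exact: minorant_in_ball.
Qed.

End QuadraticMinorant.

Theorem lemma1 (R : realType) (n : nat) (f : 'rV[R]_n -> \bar R) :
  ext_convex f ->
  (* f is finite and C^2 on the (Euclidean) ball of radius delta around 0;
     g := fine \o f is its real-valued version there *)
  (exists delta : R, 0 < delta /\
    (forall x, enorm x < delta -> f x \is a fin_num) /\
    let g := fun x => fine (f x) in
    (forall x (i j : 'I_n), enorm x < delta ->
       [/\ derivable g x (ebasis i),
           derivable (fun y => derive g y (ebasis i)) x (ebasis j),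
           {for x, continuous (fun y => derive g y (ebasis i))} &
           {for x, continuous
              (fun y => derive (fun z => derive g z (ebasis i)) y (ebasis j))}]) /\
    (* f(0) = 0, Df(0) = 0, D^2 f(0) = 2 Id *)
    g 0 = 0 /\
    (forall i : 'I_n, derive g 0 (ebasis i) = 0) /\
    (forall i j : 'I_n,
       derive (fun z => derive g z (ebasis i)) 0 (ebasis j)
         = if i == j then 2 else 0)) ->
  forall eps : R, 0 < eps ->
  exists r : R, 0 < r /\ forall x : 'rV[R]_n, ((ftilde eps r x)%:E <= f x)%E.
Proof.
move=> f_convex [delta [delta0 [f_fin C2g]]] eps eps0.
case: C2g => C2 [g0 [dg0 D0]].
pose eta := eps / n.+1%:R ^+ 2.
have eta0 : 0 < eta by rewrite divr_gt0 // exprn_gt0 // ltr0n.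
have eta_small : eta * n%:R ^+ 2 <= eps.
  rewrite mulrAC ler_pdivrMr ?exprn_gt0 ?ltr0n // ler_pM2l //.
  by rewrite ler_sqr ?nnegrE ?ler0n // ler_nat.
have dg_derivable x i j : enorm x < delta ->
    derivable (fun y => derive (fun x => fine (f x)) y (ebasis i)) x (ebasis j).
  by move=> /(C2 x i j) [].
have D_cont i j : {for 0, continuous (fun y =>
    derive (fun z => derive (fun x => fine (f x)) z (ebasis i)) y (ebasis j))}.
  by have /(C2 0 i j) [] : enorm (0 : 'rV[R]_n) < delta by rewrite enorm0.
have [rho /andP [rho0 rho_delta] p_near] :=
  partial_grad_near0 dg_derivable D_cont dg0 D0 delta0 eta0.
have f_fin_rho x : enorm x < rho -> f x \is a fin_num.
  by move=> x_rho; apply: f_fin; exact: lt_le_trans x_rho rho_delta.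
have p_supporting y : enorm y < rho -> forall x : 'rV[R]_n,
    ((fine (f y) + \sum_i derive (fun x => fine (f x)) y (ebasis i)
       * (x ord0 i - y ord0 i))%:E <= f x)%E.
  move=> y_rho x; have y_delta := lt_le_trans y_rho rho_delta.
  apply: (ext_convex_subgradient f_convex f_fin _ y_delta) => i.
  by case: (C2 y i i y_delta).
have r_pos : 0 < rho / 2 < rho by rewrite divr_gt0 //= ltr_pdivrMr //; lra.
exists (rho / 2); split; first by case/andP: r_pos.
exact: (ftilde_le_f (p := fun y i => derive (fun x => fine (f x)) y (ebasis i))
  f_fin_rho g0 eps0 (ltW eta0) eta_small p_supporting p_near r_pos).
Qed.
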